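(* Let $m_X,m_Y,\Omega_X,\Omega_Y,\alpha>0$, and for each $\bar\gamma>0$ let $f_\gamma$, $F_\gamma$ denote the pdf and cdf of the instantaneous SNR of the $\alpha$-Beaulieu–Xie shadowed channel with average SNR $\bar\gamma$. Then for every fixed $\gamma>0$, as $\bar\gamma\to\infty$, $$f_\gamma(\gamma)\sim\frac{\alpha(1-\bar\beta)^{m_Y}}{2\,\mathrm{C}_\alpha^{m_X}\Gamma(m_X)\,\bar\gamma}\left(\frac{\gamma}{\bar\gamma}\right)^{\frac{\alpha m_X}{2}-1}\exp\!\Big(-\mathrm{C}_\alpha^{-1}\big(\tfrac{\gamma}{\bar\gamma}\big)^{\alpha/2}\Big),\qquad F_\gamma(\gamma)\sim\frac{(1-\bar\beta)^{m_Y}}{\mathrm{C}_\alpha^{m_X}\Gamma(m_X+1)}\left(\frac{\gamma}{\bar\gamma}\right)^{\frac{\alpha m_X}{2}},$$ where $a\sim b$ means $a/b\to1$.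
   Context: Fix parameters $m_X,m_Y,\Omega_X,\Omega_Y>0$. The Beaulieu–Xie shadowed envelope is a random variable $\bar R>0$ with density $$f_{\bar R}(r)=\frac{2r^{2m_X-1}}{\Gamma(m_X)}\left(\frac{m_Y\Omega_X}{m_Y\Omega_X+m_X\Omega_Y}\right)^{m_Y}\left(\frac{m_X}{\Omega_X}\right)^{m_X}{}_1F_1\!\left(m_Y;m_X;\frac{m_X^2\Omega_Y r^2}{\Omega_X(m_Y\Omega_X+m_X\Omega_Y)}\right)e^{-\frac{m_X}{\Omega_X}r^2},\quad r>0.$$ Set $\bar\beta=\frac{m_X\Omega_Y}{m_Y\Omega_X+m_X\Omega_Y}$. For $\alpha>0$ put $$\mathrm{C}_\alpha=\left[\frac{\Gamma(m_X)}{\Gamma(m_X+\frac{2}{\alpha})\,{}_2F_1\!\left(m_Y,-\frac{2}{\alpha};m_X;-\frac{m_X\Omega_Y}{m_Y\Omega_X}\right)}\right]^{\alpha/2}.$$ For $\bar\gamma>0$, the instantaneous SNR of the $\alpha$-Beaulieu–Xie shadowed channel with average SNR $\bar\gamma$ is the random variable $\gamma=\bar\gamma\,\big(\mathrm{C}_\alpha m_X\bar R^2/\Omega_X\big)^{2/\alpha}$. Here ${}_1F_1(a;b;z)=\sum_{n\ge0}\frac{(a)_n}{(b)_n}\frac{z^n}{n!}$, ${}_2F_1$ is the Gauss hypergeometric function. *)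

From Stdlib Require Import Reals Factorial.
From Coquelicot Require Import Coquelicot.
Open Scope R_scope.

Definition Gamma (s : R) : R :=
  RInt_gen (fun t => Rpower t (s - 1) * exp (- t)) (at_right 0) (Rbar_locally p_infty).

Fixpoint poch (a : R) (n : nat) : R :=
  match n with
  | O => 1
  | S k => poch a k * (a + INR k)
  end.

Definition hyp1F1 (a b z : R) : R :=
  Series (fun n => poch a n / poch b n * z ^ n / INR (Factorial.fact n)).

Definition hyp2F1_series (a b c z : R) : R :=
  Series (fun n => poch a n * poch b n / poch c n * z ^ n / INR (Factorial.fact n)).

(* Gauss hypergeometric function 2F1 on z < 1: the power series for |z| < 1, and its
   (principal-branch) analytic continuation for z <= -1, given by the Pfaff
   transformation 2F1(a,b;c;z) = (1-z)^(-a) 2F1(a,c-b;c;z/(z-1)),  z/(z-1) in [1/2,1). *)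
Definition hyp2F1 (a b c z : R) : R :=
  if Rlt_dec (Rabs z) 1 then hyp2F1_series a b c z
  else Rpower (1 - z) (- a) * hyp2F1_series a (c - b) c (z / (z - 1)).

(* Density of the Beaulieu-Xie shadowed envelope \bar R (on r > 0). *)
Definition fR (mX mY OX OY r : R) : R :=
  2 * Rpower r (2 * mX - 1) / Gamma mX
  * Rpower (mY * OX / (mY * OX + mX * OY)) mY
  * Rpower (mX / OX) mX
  * hyp1F1 mY mX (mX ^ 2 * OY * r ^ 2 / (OX * (mY * OX + mX * OY)))
  * exp (- (mX / OX) * r ^ 2).

Definition betabar (mX mY OX OY : R) : R := mX * OY / (mY * OX + mX * OY).

Definition Calpha (mX mY OX OY alpha : R) : R :=
  Rpower (Gamma mX / (Gamma (mX + 2 / alpha)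
            * hyp2F1 mY (- (2 / alpha)) mX (- (mX * OY / (mY * OX)))))
         (alpha / 2).

(* Instantaneous SNR as a function of the envelope value r > 0. *)
Definition snr_of (mX mY OX OY alpha gbar r : R) : R :=
  gbar * Rpower (Calpha mX mY OX OY alpha * mX * r ^ 2 / OX) (2 / alpha).

Definition snr_cdf (mX mY OX OY alpha gbar x : R) : R :=
  RInt_gen (fun r => if Rle_dec (snr_of mX mY OX OY alpha gbar r) x
                     then fR mX mY OX OY r else 0)
           (at_right 0) (Rbar_locally p_infty).

Definition snr_pdf (mX mY OX OY alpha gbar x : R) : R :=
  Derive (snr_cdf mX mY OX OY alpha gbar) x.

Definition asymp_equiv (a b : R -> R) : Prop :=
  is_lim (fun t => a t / b t) p_infty 1.

From Stdlib Require Import Reals Factorial Lra Lia.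
From Coquelicot Require Import Coquelicot.
Open Scope R_scope.

(* The SNR is the increasing function snr_of r = gbar (C mX r^2 / OX)^(2/alpha) of the
   envelope R, so {SNR <= x} = {R <= rho (x / gbar)} for the threshold
   rho u = (OX / (C mX))^(1/2) u^(alpha/4).  Hence F(x) = P(R <= rho (x / gbar)) and, by the
   fundamental theorem of calculus, f(x) = fR (rho (x / gbar)) * d/dx rho (x / gbar).
   The envelope density factors as fR r = A r^(2 mX - 1) 1F1(mY; mX; kappa r^2) e^(-(mX/OX) r^2)
   with A > 0, the last two factors being continuous and equal to 1 at r = 0; therefore
   P(R <= b) ~ A b^(2 mX) / (2 mX) as b -> 0+.  As gbar -> +oo the threshold tends to 0+, so
   the pdf ratio (which is exactly the 1F1 factor at the threshold) and the cdf ratio both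
   tend to 1, once the constants are identified through
   A rho(u)^(2 mX) = 2 (1 - betabar)^mY u^(alpha mX / 2) / (Gamma mX C^mX) and
   Gamma (mX + 1) = mX Gamma mX. *)

Lemma ball_Rabs (x e y : R) : ball x e y <-> Rabs (y - x) < e.
Proof. reflexivity. Qed.

Lemma at_right0_interval (b : R) : 0 < b -> at_right 0 (fun a => 0 < a < b).
Proof.
  intros Hb. exists (mkposreal _ Hb). intros y Hy Hy0.
  rewrite ball_Rabs, Rminus_0_r, Rabs_pos_eq in Hy; simpl in Hy; lra.
Qed.

Lemma filter_prod_right0_point (b : R) (P : R * R -> Prop) : 0 < b ->
  (forall a, 0 < a < b -> P (a, b)) -> filter_prod (at_right 0) (at_point b) P.
Proof.
  intros Hb H. apply (Filter_prod _ _ _ (fun a => 0 < a < b) (fun y => y = b)).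
  - now apply at_right0_interval.
  - reflexivity.
  - intros x y Hx ->. now apply H.
Qed.

Lemma filter_prod_point_pinf (c : R) (P : R * R -> Prop) :
  (forall y, c < y -> P (c, y)) -> filter_prod (at_point c) (Rbar_locally p_infty) P.
Proof.
  intros H. apply (Filter_prod _ _ _ (fun a => a = c) (fun y => c < y)).
  - reflexivity.
  - now exists c.
  - intros x y -> Hy. now apply H.
Qed.

Lemma filter_prod_right0_pinf (P : R * R -> Prop) :
  (forall a y, 0 < a < 1 -> 1 < y -> P (a, y)) -> filter_prod (at_right 0) (Rbar_locally p_infty) P.
Proof.
  intros H. apply (Filter_prod _ _ _ (fun a => 0 < a < 1) (fun y => 1 < y)).
  - apply at_right0_interval; lra.
  - now exists 1.
  - intros x y Hx Hy. now apply H.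
Qed.

Lemma ex_RInt_continuous_on (h : R -> R) (m M u v : R) :
  (forall x, m <= x <= M -> continuous h x) -> m <= u <= M -> m <= v <= M -> ex_RInt h u v.
Proof.
  intros Hh Hu Hv. apply (ex_RInt_continuous (V := R_CompleteNormedModule)).
  intros z Hz. apply Hh. split.
  - apply Rle_trans with (Rmin u v); [apply Rmin_case|]; lra.
  - apply Rle_trans with (Rmax u v); [|apply Rmax_case]; lra.
Qed.

(* Between filters that eventually produce intervals [a, b] on which [h] is continuous,
   the Riemann integral of [h] eventually exists and is unique: the hypothesis of the
   Cauchy criterion [filterlimi_locally_cauchy] for improper integrals. *)
Lemma is_RInt_eventually_unique (h : R -> R) (Fa Fb : (R -> Prop) -> Prop) (Q Q' : R -> Prop) :
  Fa Q -> Fb Q' ->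
  (forall a b, Q a -> Q' b -> a < b /\ forall x, a <= x <= b -> continuous h x) ->
  filter_prod Fa Fb (fun ab => (exists y : R, is_RInt h (fst ab) (snd ab) y) /\
    (forall y1 y2, is_RInt h (fst ab) (snd ab) y1 -> is_RInt h (fst ab) (snd ab) y2 ->
       y1 = y2)).
Proof.
  intros HQ HQ' Hh. apply (Filter_prod _ _ _ Q Q' HQ HQ'). intros a b Ha Hb; simpl.
  destruct (Hh a b Ha Hb) as [Hab Hc]. split.
  - exists (RInt h a b). apply (RInt_correct (V := R_CompleteNormedModule)).
    apply (ex_RInt_continuous_on h a b); [exact Hc|lra|lra].
  - intros y1 y2 H1 H2. rewrite <- (is_RInt_unique _ _ _ _ H1). now apply is_RInt_unique.
Qed.

Section Domination.

Variables f g : R -> R.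

Definition dominated_at (x : R) : Prop :=
  continuous f x /\ continuous g x /\ Rabs (f x) <= g x.

Lemma RInt_abs_dominated (a c : R) :
  (forall x, Rmin a c <= x <= Rmax a c -> dominated_at x) ->
  Rabs (RInt f a c) <= Rabs (RInt g a c).
Proof.
  assert (Hord : forall a c, a <= c -> (forall x, a <= x <= c -> dominated_at x) ->
             Rabs (RInt f a c) <= Rabs (RInt g a c)).
  { clear a c. intros a c Hac H.
    assert (Hex : forall h, (forall x, a <= x <= c -> continuous h x) -> ex_RInt h a c)
      by (intros h Hh; apply (ex_RInt_continuous_on h a c); auto; lra).
    eapply Rle_trans; [apply abs_RInt_le; auto; apply Hex; apply H|].
    eapply Rle_trans; [apply (RInt_le _ g); auto|apply Rle_abs].
    - apply Hex. intros x Hx. apply (continuous_comp f Rabs); [apply H, Hx|apply continuous_Rabs].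
    - apply Hex, H.
    - intros x Hx. apply H. lra. }
  intros H. destruct (Rle_or_lt a c) as [Hac|Hca].
  - apply Hord; auto. intros x Hx. apply H. rewrite Rmin_left, Rmax_right; lra.
  - rewrite <- (opp_RInt_swap f c a), <- (opp_RInt_swap g c a).
    + unfold opp; simpl. rewrite !Rabs_Ropp. apply Hord; [lra|].
      intros x Hx. apply H. rewrite Rmin_right, Rmax_left; lra.
    + apply (ex_RInt_continuous_on g c a); try lra. intros x Hx. apply H.
      rewrite Rmin_right, Rmax_left; lra.
    + apply (ex_RInt_continuous_on f c a); try lra. intros x Hx. apply H.
      rewrite Rmin_right, Rmax_left; lra.
Qed.

(* Moving both endpoints of an integral of [f] costs at most what moving them costs for
   the dominating function [g]: the Cauchy estimate behind [ex_RInt_gen_dominated]. *)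
Lemma RInt_dominated_shift (a1 a2 b1 b2 : R) :
  Rmax a1 a2 < Rmin b1 b2 ->
  (forall x, Rmin a1 a2 <= x <= Rmax b1 b2 -> dominated_at x) ->
  Rabs (RInt f a2 b2 - RInt f a1 b1)
    <= Rabs (RInt g a1 b1 - RInt g a2 b1) + Rabs (RInt g a1 b1 - RInt g a1 b2).
Proof.
  intros Hab H.
  assert (Hm1 := Rmin_l a1 a2). assert (Hm2 := Rmin_r a1 a2).
  assert (HM1 := Rmax_l b1 b2). assert (HM2 := Rmax_r b1 b2).
  assert (Ha1 := Rmax_l a1 a2). assert (Ha2 := Rmax_r a1 a2).
  assert (Hb1 := Rmin_l b1 b2). assert (Hb2 := Rmin_r b1 b2).
  assert (Ef : forall u v, Rmin a1 a2 <= u <= Rmax b1 b2 -> Rmin a1 a2 <= v <= Rmax b1 b2 ->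
                 ex_RInt f u v)
    by (intros; apply (ex_RInt_continuous_on f (Rmin a1 a2) (Rmax b1 b2)); auto;
        intros x Hx; apply H, Hx).
  assert (Eg : forall u v, Rmin a1 a2 <= u <= Rmax b1 b2 -> Rmin a1 a2 <= v <= Rmax b1 b2 ->
                 ex_RInt g u v)
    by (intros; apply (ex_RInt_continuous_on g (Rmin a1 a2) (Rmax b1 b2)); auto;
        intros x Hx; apply H, Hx).
  assert (Chf : RInt f a1 b1 = RInt f a1 a2 + RInt f a2 b2 + RInt f b2 b1).
  { rewrite <- (RInt_Chasles f a1 b2 b1), <- (RInt_Chasles f a1 a2 b2);
      try (apply Ef; lra). reflexivity. }
  assert (Cga : RInt g a1 b1 - RInt g a2 b1 = RInt g a1 a2).
  { rewrite <- (RInt_Chasles g a1 a2 b1) by (apply Eg; lra). unfold plus; simpl; ring. }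
  assert (Cgb : RInt g a1 b1 - RInt g a1 b2 = RInt g b2 b1).
  { rewrite <- (RInt_Chasles g a1 b2 b1) by (apply Eg; lra). unfold plus; simpl; ring. }
  assert (A1 : Rabs (RInt f a1 a2) <= Rabs (RInt g a1 a2))
    by (apply RInt_abs_dominated; intros x Hx; apply H; lra).
  assert (A2 : Rabs (RInt f b2 b1) <= Rabs (RInt g b2 b1)).
  { apply RInt_abs_dominated. rewrite Rmin_comm, Rmax_comm. intros x Hx; apply H; lra. }
  rewrite Chf, Cga, Cgb.
  replace (RInt f a2 b2 - (RInt f a1 a2 + RInt f a2 b2 + RInt f b2 b1))
    with (- (RInt f a1 a2 + RInt f b2 b1)) by ring.
  rewrite Rabs_Ropp. eapply Rle_trans; [apply Rabs_triang|lra].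
Qed.

Lemma ex_RInt_gen_dominated (Fa Fb : (R -> Prop) -> Prop)
  (HFa : ProperFilter Fa) (HFb : ProperFilter Fb) (Q Q' : R -> Prop) :
  Fa Q -> Fb Q' ->
  (forall a b, Q a -> Q' b -> a < b /\ forall x, a <= x <= b -> dominated_at x) ->
  ex_RInt_gen g Fa Fb -> ex_RInt_gen f Fa Fb.
Proof.
  intros HQ HQ' H [lg Hg].
  assert (Hpairs : forall a1 a2 b1 b2, Q a1 -> Q a2 -> Q' b1 -> Q' b2 ->
            Rmax a1 a2 < Rmin b1 b2 /\
            forall x, Rmin a1 a2 <= x <= Rmax b1 b2 -> dominated_at x).
  { intros a1 a2 b1 b2 Ha1 Ha2 Hb1 Hb2. split.
    - unfold Rmax, Rmin. destruct (Rle_dec a1 a2), (Rle_dec b1 b2); apply H; auto.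
    - apply H; unfold Rmin, Rmax; [destruct (Rle_dec a1 a2)|destruct (Rle_dec b1 b2)]; auto. }
  assert (Hf := is_RInt_eventually_unique f Fa Fb Q Q' HQ HQ'
                  (fun a b Ha Hb => conj (proj1 (H a b Ha Hb))
                                         (fun x Hx => proj1 (proj2 (H a b Ha Hb) x Hx)))).
  assert (Hg' := is_RInt_eventually_unique g Fa Fb Q Q' HQ HQ'
                  (fun a b Ha Hb => conj (proj1 (H a b Ha Hb))
                                         (fun x Hx => proj1 (proj2 (proj2 (H a b Ha Hb) x Hx))))).
  refine (proj1 (filterlimi_locally_cauchy (U := R_CompleteSpace) (F := filter_prod Fa Fb)
            (fun ab y => is_RInt f (fst ab) (snd ab) y) Hf) _).
  intros eps.
  assert (Hgc := proj2 (filterlimi_locally_cauchy (U := R_CompleteSpace)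
      (F := filter_prod Fa Fb) (fun ab y => is_RInt g (fst ab) (snd ab) y) Hg')
      (ex_intro _ lg Hg)).
  assert (He2 : 0 < eps / 2) by (destruct eps; simpl; lra).
  destruct (Hgc (mkposreal _ He2)) as [P [[Q1 Q1' HQ1 HQ1' HP] HPc]].
  exists (fun ab => (Q (fst ab) /\ Q1 (fst ab)) /\ (Q' (snd ab) /\ Q1' (snd ab))). split.
  { apply (Filter_prod _ _ _ (fun a => Q a /\ Q1 a) (fun b => Q' b /\ Q1' b));
      try apply filter_and; auto. }
  intros [a1 b1] [a2 b2] [[Ha1 Ha1'] [Hb1 Hb1']] [[Ha2 Ha2'] [Hb2 Hb2']] u v Hu Hv; simpl in *.
  assert (Ig : forall a b, Q a -> Q' b -> is_RInt g a b (RInt g a b)).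
  { intros a b Ha Hb. apply (RInt_correct (V := R_CompleteNormedModule)).
    destruct (H a b Ha Hb) as [Hab Hd].
    apply (ex_RInt_continuous_on g a b); try lra. intros x Hx. apply Hd, Hx. }
  assert (Cauchy_g : forall a b a' b', Q a -> Q1 a -> Q' b -> Q1' b -> Q a' -> Q1 a' ->
            Q' b' -> Q1' b' -> Rabs (RInt g a b - RInt g a' b') < eps / 2).
  { intros a b a' b' Ha Ha1q Hb Hb1q Ha' Ha1q' Hb' Hb1q'. rewrite Rabs_minus_sym.
    apply (HPc (a, b) (a', b') (HP _ _ Ha1q Hb1q) (HP _ _ Ha1q' Hb1q')); simpl; apply Ig; auto. }
  rewrite <- (is_RInt_unique _ _ _ _ Hu), <- (is_RInt_unique _ _ _ _ Hv).
  apply ball_Rabs.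
  destruct (Hpairs a1 a2 b1 b2 Ha1 Ha2 Hb1 Hb2) as [Hlt Hd].
  eapply Rle_lt_trans; [apply (RInt_dominated_shift a1 a2 b1 b2 Hlt Hd)|].
  assert (E1 := Cauchy_g a1 b1 a2 b1 Ha1 Ha1' Hb1 Hb1' Ha2 Ha2' Hb1 Hb1').
  assert (E2 := Cauchy_g a1 b1 a1 b2 Ha1 Ha1' Hb1 Hb1' Ha1 Ha1' Hb2 Hb2').
  destruct eps as [e He]; simpl in *. lra.
Qed.

End Domination.

Lemma Rpower_pos (x y : R) : 0 < Rpower x y.
Proof. apply exp_pos. Qed.

Lemma is_derive_Rpower (x y : R) : 0 < x ->
  is_derive (fun t => Rpower t y) x (y * Rpower x (y - 1)).
Proof. intros Hx. apply is_derive_Reals, derivable_pt_lim_power, Hx. Qed.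

Lemma Rpower_sqr (a p : R) : Rpower a p ^ 2 = Rpower a (2 * p).
Proof. unfold Rpower. simpl. rewrite Rmult_1_r, <- exp_plus. f_equal. ring. Qed.

Lemma Rpower_pred (x p : R) : 0 < x -> Rpower x (p - 1) = Rpower x p / x.
Proof.
  intros Hx. unfold Rminus. rewrite Rpower_plus, Rpower_Ropp, Rpower_1 by exact Hx.
  reflexivity.
Qed.

Lemma Rpower_inv_base (x y : R) : 0 < x -> Rpower (/ x) y = / Rpower x y.
Proof.
  intros Hx. unfold Rpower. rewrite ln_Rinv by exact Hx. rewrite <- exp_Ropp. f_equal. ring.
Qed.

Lemma continuous_Rpower (x y : R) : 0 < x -> continuous (fun t => Rpower t y) x.
Proof.
  intros Hx. apply (ex_derive_continuous (K := R_AbsRing) (V := R_NormedModule)).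
  eexists. now apply is_derive_Rpower.
Qed.

Lemma continuous_scal_exp (M k x : R) : continuous (fun t => M * exp (- k * t)) x.
Proof. apply (ex_derive_continuous (K := R_AbsRing) (V := R_NormedModule)). auto_derive. auto. Qed.

Lemma exp_le_mono (x y : R) : x <= y -> exp x <= exp y.
Proof. intros [H|<-]; [now apply Rlt_le, exp_increasing|apply Rle_refl]. Qed.

Lemma lim_Rpower_right0 (s : R) : 0 < s ->
  filterlim (fun r => Rpower r s) (at_right 0) (locally 0).
Proof.
  intros Hs P [eps HP].
  exists (mkposreal _ (Rpower_pos eps (1 / s))). intros y Hy Hy0. apply HP.
  rewrite ball_Rabs, Rminus_0_r, Rabs_pos_eq in * by (apply Rlt_le; try apply Rpower_pos; lra).
  simpl in Hy. replace (pos eps) with (Rpower (Rpower eps (1 / s)) s).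
  - apply Rlt_Rpower_l; lra.
  - rewrite Rpower_mult. replace (1 / s * s) with 1 by (field; lra).
    apply Rpower_1, cond_pos.
Qed.

Lemma lim_right0_power_bound (h : R -> R) (K s : R) : 0 < s ->
  (forall t, 0 < t -> Rabs (h t) <= K * Rpower t s) -> filterlim h (at_right 0) (locally 0).
Proof.
  intros Hs H P [eps HP].
  assert (HK : 0 < Rabs K + 1) by (generalize (Rabs_pos K); lra).
  assert (He : 0 < eps / (Rabs K + 1)) by (apply Rdiv_lt_0_compat; [apply cond_pos|lra]).
  destruct (lim_Rpower_right0 s Hs _ (locally_ball 0 (mkposreal _ He))) as [d Hd].
  exists d. intros y Hy Hy0. apply HP. specialize (Hd y Hy Hy0).
  rewrite ball_Rabs, Rminus_0_r, Rabs_pos_eq in * by apply Rlt_le, Rpower_pos. simpl in Hd.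
  eapply Rle_lt_trans; [apply H, Hy0|].
  apply Rle_lt_trans with ((Rabs K + 1) * Rpower y s).
  - apply Rmult_le_compat_r; [apply Rlt_le, Rpower_pos|generalize (Rle_abs K); lra].
  - apply (Rmult_lt_compat_l (Rabs K + 1)) in Hd; auto.
    replace ((Rabs K + 1) * (eps / (Rabs K + 1))) with (pos eps) in Hd by (field; lra). exact Hd.
Qed.

Lemma lim_pinf_exp_bound (h : R -> R) (K k c : R) : 0 < k ->
  (forall x, c <= x -> Rabs (h x) <= K * exp (- k * x)) ->
  filterlim h (Rbar_locally p_infty) (locally 0).
Proof.
  intros Hk H P [eps HP].
  assert (HK : 0 < Rabs K + 1) by (generalize (Rabs_pos K); lra).
  assert (He : 0 < eps / (Rabs K + 1)) by (apply Rdiv_lt_0_compat; [apply cond_pos|lra]).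
  exists (Rmax c (- ln (eps / (Rabs K + 1)) / k)). intros x Hx. apply HP.
  rewrite ball_Rabs, Rminus_0_r.
  assert (Hc : c <= x) by (generalize (Rmax_l c (- ln (eps / (Rabs K + 1)) / k)); lra).
  assert (Hx' : - k * x < ln (eps / (Rabs K + 1))).
  { generalize (Rmax_r c (- ln (eps / (Rabs K + 1)) / k)). intros Hm.
    assert (Hlt : - ln (eps / (Rabs K + 1)) / k < x) by lra.
    apply (Rmult_lt_compat_l k) in Hlt; auto.
    replace (k * (- ln (eps / (Rabs K + 1)) / k)) with (- ln (eps / (Rabs K + 1))) in Hlt
      by (field; lra). lra. }
  apply exp_increasing in Hx'. rewrite exp_ln in Hx' by auto.
  eapply Rle_lt_trans; [apply H, Hc|].
  apply Rle_lt_trans with ((Rabs K + 1) * exp (- k * x)).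
  - apply Rmult_le_compat_r; [apply Rlt_le, exp_pos|generalize (Rle_abs K); lra].
  - apply Rlt_le_trans with ((Rabs K + 1) * (eps / (Rabs K + 1))).
    + now apply Rmult_lt_compat_l.
    + right. field. lra.
Qed.

Lemma power_exp_bound (a : R) : exists K,
  forall t, 1 <= t -> Rpower t a * exp (- t) <= K * exp (- (1 / 2) * t).
Proof.
  set (c := 2 * (Rabs a + 1)).
  assert (Ha0 := Rabs_pos a).
  assert (Hc : 0 < c) by (unfold c; lra).
  exists (exp (Rabs a * Rabs (ln c - 1))). intros t Ht. unfold Rpower. rewrite <- !exp_plus. apply exp_le_mono.
  assert (Hln : ln t <= t / c - 1 + ln c).
  { replace (ln t) with (ln (t / c) + ln c) by (rewrite ln_div by lra; ring).
    assert (Hq : 0 < t / c) by (apply Rdiv_lt_0_compat; lra).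
    generalize (exp_ineq1_le (ln (t / c))). rewrite exp_ln by exact Hq. lra. }
  assert (Hlt0 : 0 <= ln t).
  { rewrite <- ln_1. destruct Ht as [Ht|<-]; [apply Rlt_le, ln_increasing; lra|lra]. }
  assert (Hsign : a * ln t <= Rabs a * ln t) by (apply Rmult_le_compat_r; [lra|apply Rle_abs]).
  assert (Hlin : Rabs a * ln t <= Rabs a * (t / c) + Rabs a * Rabs (ln c - 1)).
  { rewrite <- Rmult_plus_distr_l. apply Rmult_le_compat_l; [lra|].
    generalize (Rle_abs (ln c - 1)). lra. }
  assert (Hhalf : Rabs a * (t / c) <= t / 2).
  { replace (Rabs a * (t / c)) with (t / 2 * (Rabs a / (Rabs a + 1))) by (unfold c; field; lra).
    rewrite <- (Rmult_1_r (t / 2)) at 2. apply Rmult_le_compat_l; [lra|].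
    apply (Rmult_le_reg_r (Rabs a + 1)); [lra|].
    unfold Rdiv; rewrite Rmult_assoc, Rinv_l; lra. }
  lra.
Qed.

Lemma is_RInt_gen_power (s b : R) : 0 < s -> 0 < b ->
  is_RInt_gen (fun r => Rpower r (s - 1)) (at_right 0) (at_point b) (Rpower b s / s).
Proof.
  intros Hs Hb.
  set (F := fun r => / s * Rpower r s).
  assert (HD : forall x, 0 < x -> is_derive F x (Rpower x (s - 1))).
  { intros x Hx. replace (Rpower x (s - 1)) with (/ s * (s * Rpower x (s - 1))) by (field; lra).
    apply is_derive_scal, is_derive_Rpower, Hx. }
  apply is_RInt_gen_ext with (Derive F).
  { apply filter_prod_right0_point; auto. intros a Ha x Hx. simpl in Hx.
    rewrite Rmin_left, Rmax_right in Hx by lra. apply is_derive_unique, HD. lra. }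
  replace (Rpower b s / s) with (F b - 0) by (unfold F; field; lra).
  apply is_RInt_gen_Derive.
  - apply filter_prod_right0_point; auto. intros a Ha x Hx. simpl in Hx.
    rewrite Rmin_left, Rmax_right in Hx by lra. eexists. apply HD. lra.
  - apply filter_prod_right0_point; auto. intros a Ha x Hx. simpl in Hx.
    rewrite Rmin_left, Rmax_right in Hx by lra.
    apply continuous_ext_loc with (fun r => Rpower r (s - 1)).
    + assert (Hx0 : 0 < x) by lra. exists (mkposreal _ Hx0). intros y Hy.
      rewrite ball_Rabs in Hy. apply Rabs_def2 in Hy. simpl in Hy.
      symmetry. apply is_derive_unique, HD. lra.
    + apply continuous_Rpower. lra.
  - apply (lim_right0_power_bound F (/ s) s Hs). intros t Ht. unfold F.
    rewrite Rabs_mult, (Rabs_pos_eq (/ s)), (Rabs_pos_eq (Rpower t s)); try lra.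
    + apply Rlt_le, Rpower_pos.
    + apply Rlt_le, Rinv_0_lt_compat, Hs.
  - intros P HP. unfold filtermap, at_point. apply locally_singleton. exact HP.
Qed.

Lemma is_RInt_gen_exp_tail (c M k : R) : 0 < k ->
  is_RInt_gen (fun x => M * exp (- k * x)) (at_point c) (Rbar_locally p_infty)
    (M / k * exp (- k * c)).
Proof.
  intros Hk.
  set (F := fun x => - (M / k) * exp (- k * x)).
  assert (HD : forall x, is_derive F x (M * exp (- k * x))).
  { intros x. unfold F. auto_derive; [auto|field; lra]. }
  apply is_RInt_gen_ext with (Derive F).
  { apply filter_prod_point_pinf. intros y _ x _. apply is_derive_unique, HD. }
  replace (M / k * exp (- k * c)) with (0 - F c) by (unfold F; ring).
  apply is_RInt_gen_Derive.
  - apply filter_prod_point_pinf. intros y _ x _. eexists. apply HD.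
  - apply filter_prod_point_pinf. intros y _ x _.
    apply (continuous_ext (fun x => M * exp (- k * x))).
    + intros t. symmetry. apply is_derive_unique, HD.
    + apply continuous_scal_exp.
  - intros P HP. unfold filtermap, at_point. apply locally_singleton. exact HP.
  - apply (lim_pinf_exp_bound F (Rabs M / k) k c Hk). intros x _. unfold F.
    rewrite Rabs_mult, Rabs_Ropp, (Rabs_pos_eq (exp _)) by apply Rlt_le, exp_pos.
    unfold Rdiv. rewrite Rabs_mult, (Rabs_pos_eq (/ k)) by (apply Rlt_le, Rinv_0_lt_compat, Hk).
    apply Rle_refl.
Qed.

Lemma ex_RInt_gen_right0_power_bound (f : R -> R) (s b M : R) : 0 < s -> 0 < b ->
  (forall x, 0 < x <= b -> continuous f x /\ Rabs (f x) <= M * Rpower x (s - 1)) ->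
  ex_RInt_gen f (at_right 0) (at_point b).
Proof.
  intros Hs Hb H.
  apply (ex_RInt_gen_dominated f (fun x => M * Rpower x (s - 1)) _ _
           (at_right_proper_filter 0) (at_point_filter b) (fun a => 0 < a < b) (fun y => y = b)).
  - now apply at_right0_interval.
  - reflexivity.
  - intros a y Ha ->. split; [lra|]. intros x Hx. destruct (H x) as [Hc Hle]; [lra|].
    repeat split; auto.
    apply (continuous_mult (fun _ => M) (fun x => Rpower x (s - 1))).
    + apply continuous_const.
    + apply continuous_Rpower. lra.
  - exists (scal M (Rpower b s / s)).
    apply (is_RInt_gen_scal (fun x => Rpower x (s - 1))), is_RInt_gen_power; auto.
Qed.

Lemma ex_RInt_gen_pinf_exp_bound (f : R -> R) (c M k : R) : 0 < k ->
  (forall x, c <= x -> continuous f x /\ Rabs (f x) <= M * exp (- k * x)) ->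
  ex_RInt_gen f (at_point c) (Rbar_locally p_infty).
Proof.
  intros Hk H.
  apply (ex_RInt_gen_dominated f (fun x => M * exp (- k * x)) _ _
           (at_point_filter c) (Rbar_locally_filter p_infty) (fun a => a = c) (fun y => c < y)).
  - reflexivity.
  - now exists c.
  - intros a y -> Hy. split; [lra|]. intros x Hx. destruct (H x) as [Hc Hle]; [lra|].
    repeat split; auto. apply continuous_scal_exp.
  - eexists. now apply is_RInt_gen_exp_tail.
Qed.

Lemma is_RInt_gen_nonneg (f : R -> R) (Fa Fb : (R -> Prop) -> Prop)
  (HFa : ProperFilter Fa) (HFb : ProperFilter Fb) (l : R) :
  filter_prod Fa Fb (fun ab => fst ab <= snd ab) ->
  (forall x, 0 <= f x) -> is_RInt_gen f Fa Fb l -> 0 <= l.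
Proof.
  intros Hle Hf H.
  assert (Hn : norm l <= l).
  { apply (RInt_gen_norm (V := R_CompleteNormedModule) f f l l Hle); auto.
    apply filter_forall. intros ab x _. unfold norm; simpl. unfold abs; simpl.
    rewrite Rabs_pos_eq; auto. lra. }
  unfold norm in Hn; simpl in Hn. unfold abs in Hn; simpl in Hn.
  generalize (Rabs_pos l). lra.
Qed.

Lemma is_RInt_gen_zero (Fa Fb : (R -> Prop) -> Prop) (HFa : Filter Fa) (HFb : Filter Fb) :
  is_RInt_gen (fun _ => 0) Fa Fb 0.
Proof.
  apply is_RInt_gen_ext with (Derive (fun _ => 0)).
  { apply filter_forall. intros ab x _. apply Derive_const. }
  assert (H : is_RInt_gen (Derive (fun _ : R => 0)) Fa Fb (0 - 0)).
  { apply is_RInt_gen_Derive.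
    - apply filter_forall. intros ab x _. apply ex_derive_const.
    - apply filter_forall. intros ab x _. apply (continuous_ext (fun _ => 0)).
      + intros; symmetry; apply Derive_const.
      + apply continuous_const.
    - apply filterlim_const.
    - apply filterlim_const. }
  rewrite Rminus_0_r in H. exact H.
Qed.

Definition gamma_integrand (s : R) : R -> R := fun t => Rpower t (s - 1) * exp (- t).

Lemma gamma_integrand_continuous (s x : R) : 0 < x -> continuous (gamma_integrand s) x.
Proof.
  intros Hx. apply (continuous_mult (fun t => Rpower t (s - 1)) (fun t => exp (- t))).
  - now apply continuous_Rpower.
  - apply (continuous_ext (fun t => 1 * exp (- 1 * t))).
    { intros t. rewrite Rmult_1_l. f_equal. ring. }
    apply continuous_scal_exp.
Qed.

Lemma gamma_integrand_pos (s x : R) : 0 < gamma_integrand s x.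
Proof. apply Rmult_lt_0_compat; [apply Rpower_pos|apply exp_pos]. Qed.

Lemma ex_gamma_left (s b : R) : 0 < s -> 0 < b ->
  ex_RInt_gen (gamma_integrand s) (at_right 0) (at_point b).
Proof.
  intros Hs Hb. apply (ex_RInt_gen_right0_power_bound _ s b 1); auto.
  intros x Hx. split; [apply gamma_integrand_continuous; lra|].
  rewrite Rabs_pos_eq by apply Rlt_le, gamma_integrand_pos. unfold gamma_integrand.
  rewrite Rmult_1_l. rewrite <- (Rmult_1_r (Rpower x (s - 1))) at 2.
  apply Rmult_le_compat_l; [apply Rlt_le, Rpower_pos|].
  rewrite <- exp_0. apply exp_le_mono. lra.
Qed.

Lemma ex_gamma_right (s : R) :
  ex_RInt_gen (gamma_integrand s) (at_point 1) (Rbar_locally p_infty).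
Proof.
  destruct (power_exp_bound (s - 1)) as [K HB].
  apply (ex_RInt_gen_pinf_exp_bound _ 1 K (1 / 2)); [lra|].
  intros x Hx. split; [apply gamma_integrand_continuous; lra|].
  rewrite Rabs_pos_eq by apply Rlt_le, gamma_integrand_pos. now apply HB.
Qed.

Lemma Gamma_correct (s : R) : 0 < s ->
  is_RInt_gen (gamma_integrand s) (at_right 0) (Rbar_locally p_infty) (Gamma s).
Proof.
  intros Hs. apply (RInt_gen_correct (V := R_CompleteNormedModule)).
  apply (ex_RInt_gen_Chasles (gamma_integrand s) 1).
  - apply ex_gamma_left; lra.
  - apply ex_gamma_right.
Qed.

Lemma Gamma_pos (s : R) : 0 < s -> 0 < Gamma s.
Proof.
  intros Hs.
  destruct (ex_gamma_left s (1 / 2) Hs) as [A HA]; [lra|].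
  destruct (ex_gamma_right s) as [C HC].
  assert (HB : ex_RInt (gamma_integrand s) (1 / 2) 1).
  { apply (ex_RInt_continuous_on (gamma_integrand s) (1 / 2) 1); try lra.
    intros x Hx. apply gamma_integrand_continuous. lra. }
  destruct HB as [B HB].
  assert (Hall : is_RInt_gen (gamma_integrand s) (at_right 0) (Rbar_locally p_infty)
                   (plus A (plus B C))).
  { apply (is_RInt_gen_Chasles (V := R_NormedModule)) with (1 / 2); auto.
    apply (is_RInt_gen_Chasles (V := R_NormedModule)) with 1; auto.
    now apply is_RInt_gen_at_point. }
  assert (HG : Gamma s = plus A (plus B C)).
  { unfold Gamma. now apply (is_RInt_gen_unique (V := R_CompleteNormedModule)). }
  assert (0 <= A).
  { apply (is_RInt_gen_nonneg (gamma_integrand s) _ _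
             (at_right_proper_filter 0) (at_point_filter (1 / 2)) A); auto.
    - apply filter_prod_right0_point; [lra|]. intros; simpl; lra.
    - intros; apply Rlt_le, gamma_integrand_pos. }
  assert (0 <= C).
  { apply (is_RInt_gen_nonneg (gamma_integrand s) _ _
             (at_point_filter 1) (Rbar_locally_filter p_infty) C); auto.
    - apply filter_prod_point_pinf. intros; simpl; lra.
    - intros; apply Rlt_le, gamma_integrand_pos. }
  assert (0 < B).
  { rewrite <- (is_RInt_unique _ _ _ _ HB).
    apply RInt_gt_0; [lra| |]; intros; [apply gamma_integrand_pos|].
    apply gamma_integrand_continuous. lra. }
  rewrite HG. unfold plus; simpl. lra.
Qed.

(* The boundary term of the integration by parts behind Gamma (s + 1) = s Gamma s. *)
Definition gamma_boundary (s : R) : R -> R := fun t => - (Rpower t s * exp (- t)).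

Lemma is_derive_gamma_boundary (s t : R) : 0 < t ->
  is_derive (gamma_boundary s) t (gamma_integrand (s + 1) t - s * gamma_integrand s t).
Proof.
  intros Ht. unfold gamma_boundary, gamma_integrand. replace (s + 1 - 1) with s by ring.
  replace (Rpower t s * exp (- t) - s * (Rpower t (s - 1) * exp (- t)))
    with (- (s * Rpower t (s - 1) * exp (- t) + Rpower t s * (- 1 * exp (- t)))) by ring.
  apply (is_derive_opp (fun t => Rpower t s * exp (- t))).
  apply (is_derive_mult (fun t => Rpower t s) (fun t => exp (- t))).
  - now apply is_derive_Rpower.
  - auto_derive; [exact I|ring].
  - intros; apply Rmult_comm.
Qed.

(* The boundary terms -t^s e^(-t) vanish both at 0+ and at +oo. *)
Lemma is_RInt_gen_gamma_boundary (s : R) : 0 < s ->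
  is_RInt_gen (Derive (gamma_boundary s)) (at_right 0) (Rbar_locally p_infty) 0.
Proof.
  intros Hs. assert (HD := is_derive_gamma_boundary s).
  rewrite <- (Rminus_0_r 0) at 2.
  apply is_RInt_gen_Derive.
  - apply filter_prod_right0_pinf. intros a y Ha Hy x Hx. simpl in Hx.
    rewrite Rmin_left, Rmax_right in Hx by lra. eexists. apply HD. lra.
  - apply filter_prod_right0_pinf. intros a y Ha Hy x Hx. simpl in Hx.
    rewrite Rmin_left, Rmax_right in Hx by lra.
    apply continuous_ext_loc with (fun t => gamma_integrand (s + 1) t - s * gamma_integrand s t).
    + assert (Hx0 : 0 < x) by lra. exists (mkposreal _ Hx0). intros z Hz.
      rewrite ball_Rabs in Hz. apply Rabs_def2 in Hz. simpl in Hz.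
      symmetry. apply is_derive_unique, HD. lra.
    + apply (continuous_minus (gamma_integrand (s + 1)) (fun t => s * gamma_integrand s t)).
      * apply gamma_integrand_continuous. lra.
      * apply (continuous_mult (fun _ => s) (gamma_integrand s)).
        -- apply continuous_const.
        -- apply gamma_integrand_continuous. lra.
  - apply (lim_right0_power_bound _ 1 s Hs). intros t Ht. unfold gamma_boundary.
    rewrite Rabs_Ropp, Rabs_pos_eq, Rmult_1_l.
    + rewrite <- (Rmult_1_r (Rpower t s)) at 2.
      apply Rmult_le_compat_l; [apply Rlt_le, Rpower_pos|].
      rewrite <- exp_0. apply exp_le_mono. lra.
    + apply Rmult_le_pos; apply Rlt_le; [apply Rpower_pos|apply exp_pos].
  - destruct (power_exp_bound s) as [K HB].
    apply (lim_pinf_exp_bound _ K (1 / 2) 1); [lra|]. intros t Ht. unfold gamma_boundary.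
    rewrite Rabs_Ropp, Rabs_pos_eq by (apply Rmult_le_pos; apply Rlt_le;
      [apply Rpower_pos|apply exp_pos]).
    now apply HB.
Qed.

(* Integration by parts: t^s e^(-t) = d/dt (-t^s e^(-t)) + s t^(s-1) e^(-t) on (0, oo). *)
Lemma Gamma_succ (s : R) : 0 < s -> Gamma (s + 1) = s * Gamma s.
Proof.
  intros Hs.
  assert (HD := is_derive_gamma_boundary s).
  assert (Hsum := is_RInt_gen_plus _ _ _ _ (is_RInt_gen_gamma_boundary s Hs)
                    (is_RInt_gen_scal _ s _ (Gamma_correct s Hs))).
  unfold Gamma at 1. apply (is_RInt_gen_unique (V := R_CompleteNormedModule)).
  replace (s * Gamma s) with (plus 0 (scal s (Gamma s)))
    by (unfold plus, scal; simpl; unfold mult; simpl; ring).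
  apply is_RInt_gen_ext with (2 := Hsum).
  apply filter_prod_right0_pinf. intros a y Ha Hy x Hx. simpl in Hx.
  rewrite Rmin_left, Rmax_right in Hx by lra.
  rewrite (is_derive_unique _ _ _ (HD x ltac:(lra))).
  unfold plus, scal; simpl; unfold mult; simpl. unfold gamma_integrand at 1. ring.
Qed.

Lemma poch_pos (a : R) (n : nat) : 0 < a -> 0 < poch a n.
Proof.
  intros Ha. induction n as [|n IH]; simpl; [lra|].
  apply Rmult_lt_0_compat; auto. generalize (pos_INR n). lra.
Qed.

Definition kummer_coef (a b : R) (n : nat) : R := poch a n / poch b n / INR (fact n).

Lemma kummer_coef_pos (a b : R) (n : nat) : 0 < a -> 0 < b -> 0 < kummer_coef a b n.
Proof.
  intros Ha Hb. unfold kummer_coef, Rdiv.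
  repeat apply Rmult_lt_0_compat; try apply Rinv_0_lt_compat; try now apply poch_pos.
  apply lt_0_INR, lt_O_fact.
Qed.

Lemma hyp1F1_PSeries (a b z : R) : 0 < b -> hyp1F1 a b z = PSeries (kummer_coef a b) z.
Proof.
  intros Hb. unfold hyp1F1, PSeries. apply Series_ext. intros n. unfold kummer_coef.
  assert (poch b n <> 0) by (apply Rgt_not_eq, poch_pos, Hb).
  assert (INR (fact n) <> 0) by apply INR_fact_neq_0.
  field; auto.
Qed.

Lemma kummer_coef_ratio (a b : R) (n : nat) : 0 < a -> 0 < b ->
  kummer_coef a b (S n) / kummer_coef a b n = (a + INR n) / (b + INR n) / INR (S n).
Proof.
  intros Ha Hb. unfold kummer_coef. simpl poch. rewrite fact_simpl, mult_INR.
  assert (0 < poch a n) by now apply poch_pos.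
  assert (0 < poch b n) by now apply poch_pos.
  assert (0 < INR (fact n)) by apply lt_0_INR, lt_O_fact.
  assert (0 < INR (S n)) by (apply lt_0_INR; lia).
  assert (0 <= INR n) by apply pos_INR.
  field. repeat split; lra.
Qed.

Lemma kummer_radius (a b : R) : 0 < a -> 0 < b -> CV_radius (kummer_coef a b) = p_infty.
Proof.
  intros Ha Hb. apply CV_radius_infinite_DAlembert.
  { intros n. apply Rgt_not_eq, kummer_coef_pos; auto. }
  apply is_lim_seq_ext with (fun n => (a + INR n) / (b + INR n) / INR (S n)).
  { intros n. rewrite Rabs_pos_eq.
    - symmetry. now apply kummer_coef_ratio.
    - apply Rlt_le, Rdiv_lt_0_compat; now apply kummer_coef_pos. }
  apply is_lim_seq_le_le with (fun _ => 0) (fun n => (a / b + 1) * / INR (S n)).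
  - intros n. assert (0 < INR (S n)) by (apply lt_0_INR; lia).
    assert (0 <= INR n) by apply pos_INR.
    assert (Hq : (a + INR n) / (b + INR n) <= a / b + 1).
    { apply (Rmult_le_reg_r (b + INR n)); [lra|].
      unfold Rdiv. rewrite Rmult_assoc, Rinv_l, Rmult_1_r by lra.
      rewrite Rmult_plus_distr_l, Rmult_plus_distr_r, Rmult_assoc.
      replace (/ b * b) with 1 by (field; lra).
      assert (0 <= a * / b * INR n).
      { repeat apply Rmult_le_pos; try apply Rlt_le, Rinv_0_lt_compat; lra. }
      lra. }
    split.
    + apply Rlt_le, Rdiv_lt_0_compat; [apply Rdiv_lt_0_compat|]; lra.
    + apply Rmult_le_compat_r; [apply Rlt_le, Rinv_0_lt_compat; lra|exact Hq].
  - apply is_lim_seq_const.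
  - replace (Finite 0) with (Rbar_mult (a / b + 1) 0) by (simpl; f_equal; ring).
    apply is_lim_seq_scal_l, (is_lim_seq_incr_1 (fun n => / INR n)).
    replace (Finite 0) with (Rbar_inv p_infty) by reflexivity.
    apply is_lim_seq_inv; [apply is_lim_seq_INR|discriminate].
Qed.

Lemma hyp1F1_continuous (a b z : R) : 0 < a -> 0 < b -> continuous (hyp1F1 a b) z.
Proof.
  intros Ha Hb. apply continuous_ext with (PSeries (kummer_coef a b)).
  - intros; symmetry; now apply hyp1F1_PSeries.
  - apply continuity_pt_filterlim, PSeries_continuity.
    rewrite kummer_radius; simpl; auto.
Qed.

Lemma hyp1F1_at_0 (a b : R) : 0 < b -> hyp1F1 a b 0 = 1.
Proof.
  intros Hb. rewrite hyp1F1_PSeries, PSeries_0 by exact Hb.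
  unfold kummer_coef. simpl. field.
Qed.

Lemma continuous_quadratic (c x : R) : continuous (fun r => c * r ^ 2) x.
Proof. apply (ex_derive_continuous (K := R_AbsRing) (V := R_NormedModule)). auto_derive. auto. Qed.

Section Envelope.

Variables mX mY OX OY : R.
Hypothesis hmX : 0 < mX.
Hypothesis hmY : 0 < mY.

(* The 1F1 factor of the density; it tends to 1 as r -> 0 and drives the pdf ratio. *)
Definition kummer_factor (r : R) : R :=
  hyp1F1 mY mX (mX ^ 2 * OY * r ^ 2 / (OX * (mY * OX + mX * OY))).

Definition envelope_shape (r : R) : R := kummer_factor r * exp (- (mX / OX) * r ^ 2).

(* The constant A = 2 (1 - betabar)^mY (mX / OX)^mX / Gamma mX of the density. *)
Definition envelope_const : R :=
  2 / Gamma mX * Rpower (mY * OX / (mY * OX + mX * OY)) mY * Rpower (mX / OX) mX.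

Lemma fR_factor (r : R) :
  fR mX mY OX OY r = envelope_const * Rpower r (2 * mX - 1) * envelope_shape r.
Proof. unfold fR, envelope_const, envelope_shape, kummer_factor, Rdiv. ring. Qed.

Lemma envelope_const_pos : 0 < envelope_const.
Proof.
  unfold envelope_const, Rdiv. assert (HG := Gamma_pos mX hmX).
  repeat apply Rmult_lt_0_compat; try apply Rpower_pos; try apply Rinv_0_lt_compat; lra.
Qed.

Lemma kummer_factor_continuous (r : R) : continuous kummer_factor r.
Proof.
  unfold kummer_factor.
  apply (continuous_comp (fun r => mX ^ 2 * OY * r ^ 2 / (OX * (mY * OX + mX * OY)))
           (hyp1F1 mY mX)).
  - apply (continuous_ext (fun r => mX ^ 2 * OY / (OX * (mY * OX + mX * OY)) * r ^ 2)).
    + intros t.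
      change (mX ^ 2 * OY / (OX * (mY * OX + mX * OY)) * t ^ 2
              = mX ^ 2 * OY * t ^ 2 / (OX * (mY * OX + mX * OY))).
      unfold Rdiv. ring.
    + apply continuous_quadratic.
  - now apply hyp1F1_continuous.
Qed.

Lemma kummer_factor_at_0 : kummer_factor 0 = 1.
Proof.
  unfold kummer_factor. rewrite <- (hyp1F1_at_0 mY mX hmX). f_equal. unfold Rdiv. ring.
Qed.

Lemma kummer_factor_right0 : filterlim kummer_factor (at_right 0) (locally 1).
Proof.
  rewrite <- kummer_factor_at_0.
  eapply filterlim_filter_le_1; [apply filter_le_within|apply kummer_factor_continuous].
Qed.

Lemma envelope_shape_continuous (r : R) : continuous envelope_shape r.
Proof.
  apply (continuous_mult kummer_factor (fun r => exp (- (mX / OX) * r ^ 2))).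
  - apply kummer_factor_continuous.
  - apply continuous_exp_comp, continuous_quadratic.
Qed.

Lemma envelope_shape_at_0 : envelope_shape 0 = 1.
Proof.
  unfold envelope_shape. rewrite kummer_factor_at_0.
  replace (- (mX / OX) * 0 ^ 2) with 0 by ring. rewrite exp_0. ring.
Qed.

Lemma fR_continuous (x : R) : 0 < x -> continuous (fR mX mY OX OY) x.
Proof.
  intros Hx.
  apply (continuous_ext (fun r => envelope_const * Rpower r (2 * mX - 1) * envelope_shape r)).
  { intros r. symmetry. apply fR_factor. }
  apply (continuous_mult (fun r => envelope_const * Rpower r (2 * mX - 1)) envelope_shape).
  - apply (continuous_mult (fun _ => envelope_const) (fun r => Rpower r (2 * mX - 1))).
    + apply continuous_const.
    + now apply continuous_Rpower.
  - apply envelope_shape_continuous.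
Qed.

Lemma ex_RInt_fR (a b : R) : 0 < a -> 0 < b -> ex_RInt (fR mX mY OX OY) a b.
Proof.
  intros Ha Hb. apply (ex_RInt_continuous (V := R_CompleteNormedModule)).
  intros z Hz. apply fR_continuous.
  assert (0 < Rmin a b) by (now apply Rmin_case). lra.
Qed.

(* P(R <= b) = int_0^b fR, an improper integral at 0 since fR may blow up there (mX < 1/2). *)
Definition envelope_cdf (b : R) : R := RInt_gen (fR mX mY OX OY) (at_right 0) (at_point b).

Lemma envelope_cdf_correct (b : R) : 0 < b ->
  is_RInt_gen (fR mX mY OX OY) (at_right 0) (at_point b) (envelope_cdf b).
Proof.
  intros Hb. apply (RInt_gen_correct (V := R_CompleteNormedModule)).
  destruct (continuity_ab_maj (fun r => Rabs (envelope_shape r)) 0 b) as [r0 [Hr0 _]]; [lra| |].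
  { intros c _. apply continuity_pt_filterlim.
    apply (continuous_comp envelope_shape Rabs).
    - apply envelope_shape_continuous.
    - apply continuous_Rabs. }
  apply (ex_RInt_gen_right0_power_bound _ (2 * mX) b
           (envelope_const * Rabs (envelope_shape r0))); [lra|exact Hb|].
  intros x Hx. split; [apply fR_continuous; lra|].
  assert (HA := envelope_const_pos).
  rewrite fR_factor, !Rabs_mult, (Rabs_pos_eq envelope_const), (Rabs_pos_eq (Rpower _ _))
    by (apply Rlt_le; auto; apply Rpower_pos).
  replace (envelope_const * Rabs (envelope_shape r0) * Rpower x (2 * mX - 1))
    with (envelope_const * Rpower x (2 * mX - 1) * Rabs (envelope_shape r0)) by ring.
  apply Rmult_le_compat_l.
  - apply Rmult_le_pos; apply Rlt_le; [exact HA|apply Rpower_pos].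
  - apply Hr0. lra.
Qed.

Lemma envelope_cdf_split (b : R) : 0 < b ->
  envelope_cdf b = envelope_cdf 1 + RInt (fR mX mY OX OY) 1 b.
Proof.
  intros Hb. unfold envelope_cdf at 1. apply (is_RInt_gen_unique (V := R_CompleteNormedModule)).
  apply (is_RInt_gen_Chasles (V := R_NormedModule) _ 1).
  - apply envelope_cdf_correct. lra.
  - apply is_RInt_gen_at_point, (RInt_correct (V := R_CompleteNormedModule)).
    apply ex_RInt_fR; lra.
Qed.

Definition envelope_cdf_approx (b : R) : R := envelope_const * Rpower b (2 * mX) / (2 * mX).

Lemma envelope_cdf_approx_pos (b : R) : 0 < envelope_cdf_approx b.
Proof.
  unfold envelope_cdf_approx. apply Rdiv_lt_0_compat; [|lra].
  apply Rmult_lt_0_compat; [apply envelope_const_pos|apply Rpower_pos].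
Qed.

Lemma envelope_cdf_near_zero (b eps : R) : 0 < b ->
  (forall r, 0 < r <= b -> Rabs (envelope_shape r - 1) <= eps) ->
  Rabs (envelope_cdf b - envelope_cdf_approx b) <= eps * envelope_cdf_approx b.
Proof.
  intros Hb Hclose.
  set (A := envelope_const). assert (HA : 0 < A) by apply envelope_const_pos.
  assert (Hpow := is_RInt_gen_power (2 * mX) b ltac:(lra) Hb).
  assert (Hdiff := is_RInt_gen_minus _ _ _ _ (envelope_cdf_correct b Hb)
                     (is_RInt_gen_scal _ A _ Hpow)).
  assert (Hbound := is_RInt_gen_scal _ (eps * A) _ Hpow).
  assert (Hle : filter_prod (at_right 0) (at_point b) (fun ab : R * R => fst ab <= snd ab)).
  { apply filter_prod_right0_point; auto. intros a Ha; simpl; lra. }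
  assert (Hdom : filter_prod (at_right 0) (at_point b) (fun ab : R * R =>
      forall x, fst ab <= x <= snd ab ->
        norm (minus (fR mX mY OX OY x) (scal A (Rpower x (2 * mX - 1))))
          <= scal (eps * A) (Rpower x (2 * mX - 1)))).
  { apply filter_prod_right0_point; auto. intros a Ha x Hx. simpl in Hx.
    unfold norm, minus, plus, opp, scal; simpl. unfold abs, mult; simpl.
    rewrite fR_factor. fold A.
    replace (A * Rpower x (2 * mX - 1) * envelope_shape x + - (A * Rpower x (2 * mX - 1)))
      with (A * Rpower x (2 * mX - 1) * (envelope_shape x - 1)) by ring.
    assert (HP : 0 < A * Rpower x (2 * mX - 1))
      by (apply Rmult_lt_0_compat; [exact HA|apply Rpower_pos]).
    rewrite Rabs_mult, (Rabs_pos_eq (A * _)) by lra.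
    replace (eps * A * Rpower x (2 * mX - 1)) with (A * Rpower x (2 * mX - 1) * eps) by ring.
    apply Rmult_le_compat_l; [lra|]. apply Hclose. lra. }
  assert (Hn := RInt_gen_norm (V := R_CompleteNormedModule) _ _ _ _ Hle Hdom Hdiff Hbound).
  unfold norm, minus, plus, opp, scal in Hn; simpl in Hn. unfold abs, mult in Hn; simpl in Hn.
  unfold envelope_cdf_approx. fold A.
  replace (A * Rpower b (2 * mX) / (2 * mX)) with (A * (Rpower b (2 * mX) / (2 * mX)))
    by (unfold Rdiv; ring).
  replace (eps * (A * (Rpower b (2 * mX) / (2 * mX))))
    with (eps * A * (Rpower b (2 * mX) / (2 * mX))) by ring.
  exact Hn.
Qed.

Lemma envelope_cdf_asymptotic :
  filterlim (fun b => envelope_cdf b / envelope_cdf_approx b) (at_right 0) (locally 1).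
Proof.
  intros P [eps HP].
  assert (He2 : 0 < eps / 2) by (destruct eps; simpl; lra).
  assert (Hc := envelope_shape_continuous 0).
  unfold continuous in Hc. rewrite envelope_shape_at_0 in Hc.
  destruct (Hc _ (locally_ball 1 (mkposreal _ He2))) as [d Hd].
  exists d. intros b Hb Hb0. apply HP. rewrite ball_Rabs.
  assert (HT := envelope_cdf_approx_pos b).
  assert (Hnear : Rabs (envelope_cdf b - envelope_cdf_approx b)
                    <= eps / 2 * envelope_cdf_approx b).
  { apply envelope_cdf_near_zero; auto. intros r Hr. apply Rlt_le, (Hd r).
    rewrite ball_Rabs, Rminus_0_r, Rabs_pos_eq in * by lra. simpl in *. lra. }
  replace (envelope_cdf b / envelope_cdf_approx b - 1)
    with ((envelope_cdf b - envelope_cdf_approx b) / envelope_cdf_approx b) by (field; lra).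
  unfold Rdiv. rewrite Rabs_mult, Rabs_inv, (Rabs_pos_eq (envelope_cdf_approx b)) by lra.
  apply (Rmult_lt_reg_r (envelope_cdf_approx b)); [exact HT|].
  rewrite Rmult_assoc, Rinv_l, Rmult_1_r by lra.
  destruct eps as [e He]; simpl in *. nra.
Qed.

End Envelope.

Section Snr.

Variables mX mY OX OY alpha : R.
Hypothesis hmX : 0 < mX.
Hypothesis hmY : 0 < mY.
Hypothesis hOX : 0 < OX.
Hypothesis halpha : 0 < alpha.

Let C := Calpha mX mY OX OY alpha.

Lemma Calpha_pos : 0 < C.
Proof. apply Rpower_pos. Qed.

Definition snr_threshold (u : R) : R := Rpower (OX / (C * mX)) (1 / 2) * Rpower u (alpha / 4).

Lemma snr_threshold_pos (u : R) : 0 < snr_threshold u.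
Proof. apply Rmult_lt_0_compat; apply Rpower_pos. Qed.

Lemma snr_threshold_sqr (u : R) : snr_threshold u ^ 2 = OX / (C * mX) * Rpower u (alpha / 2).
Proof.
  assert (HC := Calpha_pos).
  unfold snr_threshold. rewrite Rpow_mult_distr, !Rpower_sqr.
  replace (2 * (1 / 2)) with 1 by field. rewrite Rpower_1.
  - f_equal. f_equal. field.
  - apply Rdiv_lt_0_compat; [lra|]. now apply Rmult_lt_0_compat.
Qed.

Lemma snr_of_threshold (gbar x : R) : 0 < gbar -> 0 < x ->
  snr_of mX mY OX OY alpha gbar (snr_threshold (x / gbar)) = x.
Proof.
  intros Hg Hx. assert (HC := Calpha_pos). unfold snr_of. fold C.
  rewrite snr_threshold_sqr.
  replace (C * mX * (OX / (C * mX) * Rpower (x / gbar) (alpha / 2)) / OX)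
    with (Rpower (x / gbar) (alpha / 2)) by (field; repeat split; lra).
  rewrite Rpower_mult. replace (alpha / 2 * (2 / alpha)) with 1 by (field; lra).
  rewrite Rpower_1 by (apply Rdiv_lt_0_compat; lra). field. lra.
Qed.

Lemma snr_of_increasing (gbar r1 r2 : R) : 0 < gbar -> 0 < r1 < r2 ->
  snr_of mX mY OX OY alpha gbar r1 < snr_of mX mY OX OY alpha gbar r2.
Proof.
  intros Hg Hr. assert (HC := Calpha_pos). unfold snr_of. fold C.
  apply Rmult_lt_compat_l; [exact Hg|]. apply Rlt_Rpower_l; [apply Rdiv_lt_0_compat; lra|].
  split.
  - apply Rdiv_lt_0_compat; [|lra]. apply Rmult_lt_0_compat; [nra|]. apply pow_lt. lra.
  - unfold Rdiv. apply Rmult_lt_compat_r; [apply Rinv_0_lt_compat, hOX|].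
    apply Rmult_lt_compat_l; [nra|]. simpl. nra.
Qed.

Lemma snr_cdf_eq (gbar x : R) : 0 < gbar -> 0 < x ->
  snr_cdf mX mY OX OY alpha gbar x = envelope_cdf mX mY OX OY (snr_threshold (x / gbar)).
Proof.
  intros Hg Hx. set (p := snr_threshold (x / gbar)).
  assert (Hp : 0 < p) by apply snr_threshold_pos.
  assert (Hsnr : snr_of mX mY OX OY alpha gbar p = x) by now apply snr_of_threshold.
  unfold snr_cdf. apply (is_RInt_gen_unique (V := R_CompleteNormedModule)).
  rewrite <- (Rplus_0_r (envelope_cdf mX mY OX OY p)).
  apply (is_RInt_gen_Chasles (V := R_NormedModule) _ p).
  - apply is_RInt_gen_ext with (fR mX mY OX OY); [|now apply envelope_cdf_correct].
    apply filter_prod_right0_point; auto. intros a Ha z Hz. simpl in Hz.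
    rewrite Rmin_left, Rmax_right in Hz by lra.
    destruct (Rle_dec (snr_of mX mY OX OY alpha gbar z) x) as [_|Hn]; auto.
    exfalso. apply Hn. rewrite <- Hsnr. apply Rlt_le, snr_of_increasing; auto. lra.
  - apply is_RInt_gen_ext with (fun _ => 0); [|apply is_RInt_gen_zero; apply filter_filter].
    apply filter_prod_point_pinf. intros y Hy z Hz. simpl in Hz.
    rewrite Rmin_left, Rmax_right in Hz by lra.
    destruct (Rle_dec (snr_of mX mY OX OY alpha gbar z) x) as [Hl|_]; auto.
    exfalso. rewrite <- Hsnr in Hl. apply Rle_not_lt in Hl. apply Hl.
    apply snr_of_increasing; auto. lra.
Qed.

Lemma is_derive_snr_threshold (gbar x : R) : 0 < gbar -> 0 < x ->
  is_derive (fun y => snr_threshold (y / gbar)) x (alpha / 4 * snr_threshold (x / gbar) / x).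
Proof.
  intros Hg Hx. unfold snr_threshold.
  set (D := Rpower (OX / (C * mX)) (1 / 2)).
  apply (is_derive_ext (fun y => D * Rpower (y / gbar) (alpha / 4))); [reflexivity|].
  assert (Hu : 0 < x / gbar) by (apply Rdiv_lt_0_compat; lra).
  replace (alpha / 4 * (D * Rpower (x / gbar) (alpha / 4)) / x)
    with (D * (/ gbar * (alpha / 4 * Rpower (x / gbar) (alpha / 4 - 1)))).
  - apply (is_derive_scal (fun y => Rpower (y / gbar) (alpha / 4))).
    apply (is_derive_comp (fun t => Rpower t (alpha / 4)) (fun y => y / gbar)).
    + now apply is_derive_Rpower.
    + auto_derive; [exact I|field; lra].
  - rewrite Rpower_pred by exact Hu. field. lra.
Qed.

Lemma snr_pdf_eq (gbar x : R) : 0 < gbar -> 0 < x ->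
  snr_pdf mX mY OX OY alpha gbar x
  = fR mX mY OX OY (snr_threshold (x / gbar)) * (alpha / 4 * snr_threshold (x / gbar) / x).
Proof.
  intros Hg Hx. unfold snr_pdf.
  rewrite (Derive_ext_loc _ (fun y => envelope_cdf mX mY OX OY 1
                                     + RInt (fR mX mY OX OY) 1 (snr_threshold (y / gbar)))).
  2: { exists (mkposreal _ Hx). intros y Hy. rewrite ball_Rabs in Hy.
       apply Rabs_def2 in Hy. simpl in Hy.
       rewrite snr_cdf_eq by lra. apply envelope_cdf_split; auto. apply snr_threshold_pos. }
  apply is_derive_unique.
  assert (Hr0 : 0 < snr_threshold (x / gbar)) by apply snr_threshold_pos.
  assert (Hint : is_derive (fun y => RInt (fR mX mY OX OY) 1 y) (snr_threshold (x / gbar))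
                   (fR mX mY OX OY (snr_threshold (x / gbar)))).
  { apply (is_derive_RInt (V := R_NormedModule) _ _ 1).
    - exists (mkposreal _ Hr0). intros y Hy. rewrite ball_Rabs in Hy.
      apply Rabs_def2 in Hy. simpl in Hy.
      apply (RInt_correct (V := R_CompleteNormedModule)), ex_RInt_fR; auto; lra.
    - now apply fR_continuous. }
  assert (H := is_derive_comp _ _ x _ _ Hint (is_derive_snr_threshold gbar x Hg Hx)).
  assert (H2 := is_derive_plus _ _ _ _ _ (is_derive_const (envelope_cdf mX mY OX OY 1) x) H).
  simpl in H2. unfold plus, zero, scal in H2; simpl in H2. unfold mult in H2; simpl in H2.
  rewrite Rplus_0_l, Rmult_comm in H2. exact H2.
Qed.

Lemma snr_threshold_vanishes (g : R) : 0 < g ->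
  filterlim (fun gbar => snr_threshold (g / gbar)) (Rbar_locally p_infty) (at_right 0).
Proof.
  intros Hgp P [eps HP]. assert (HC := Calpha_pos).
  set (D := Rpower (OX / (C * mX)) (1 / 2)). assert (HD : 0 < D) by apply Rpower_pos.
  set (T := Rpower (eps / D) (4 / alpha)). assert (HT : 0 < T) by apply Rpower_pos.
  exists (g / T). intros gbar Hgb.
  assert (Hgb0 : 0 < gbar) by (assert (0 < g / T) by (apply Rdiv_lt_0_compat; auto); lra).
  apply HP; [|apply snr_threshold_pos].
  rewrite ball_Rabs, Rminus_0_r, Rabs_pos_eq by apply Rlt_le, snr_threshold_pos.
  unfold snr_threshold. fold D.
  assert (Hu : g / gbar < T).
  { apply (Rmult_lt_reg_r gbar); [exact Hgb0|].
    unfold Rdiv. rewrite Rmult_assoc, Rinv_l, Rmult_1_r by lra.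
    apply (Rmult_lt_reg_l (/ T)); [now apply Rinv_0_lt_compat|].
    replace (/ T * (T * gbar)) with gbar by (field; lra). unfold Rdiv in Hgb. lra. }
  assert (H1 : Rpower (g / gbar) (alpha / 4) < Rpower T (alpha / 4)).
  { apply Rlt_Rpower_l; [lra|]. split; auto. apply Rdiv_lt_0_compat; auto. }
  unfold T in H1. rewrite Rpower_mult in H1.
  replace (4 / alpha * (alpha / 4)) with 1 in H1 by (field; lra).
  rewrite Rpower_1 in H1 by (apply Rdiv_lt_0_compat; [apply cond_pos|exact HD]).
  apply (Rmult_lt_compat_l D) in H1; [|exact HD].
  replace (D * (eps / D)) with (pos eps) in H1 by (field; lra). exact H1.
Qed.

End Snr.

(* Identification of the constants (the envelope constant A at the threshold rho u, and
   the shadowing factor 1 - betabar), which turns both ratios in the theorem into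
   quantities depending on gbar only through the threshold rho (g / gbar). *)
Section Constants.

Variables mX mY OX OY alpha : R.
Hypothesis hmX : 0 < mX.
Hypothesis hmY : 0 < mY.
Hypothesis hOX : 0 < OX.
Hypothesis hOY : 0 < OY.
Hypothesis halpha : 0 < alpha.

Let C := Calpha mX mY OX OY alpha.

Lemma one_minus_betabar :
  1 - betabar mX mY OX OY = mY * OX / (mY * OX + mX * OY).
Proof.
  unfold betabar. field.
  assert (0 < mY * OX) by now apply Rmult_lt_0_compat.
  assert (0 < mX * OY) by now apply Rmult_lt_0_compat. lra.
Qed.

Lemma envelope_const_at_threshold (u : R) : 0 < u ->
  envelope_const mX mY OX OY * Rpower (snr_threshold mX mY OX OY alpha u) (2 * mX)
  = 2 * Rpower (mY * OX / (mY * OX + mX * OY)) mY / (Gamma mX * Rpower C mX)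
    * Rpower u (alpha * mX / 2).
Proof.
  intros Hu. assert (HC : 0 < C) by apply Rpower_pos.
  assert (HG := Gamma_pos mX hmX).
  assert (HP : 0 < OX / (C * mX)) by (apply Rdiv_lt_0_compat; [|apply Rmult_lt_0_compat]; lra).
  unfold envelope_const, snr_threshold. fold C.
  rewrite <- Rpower_mult_distr, !Rpower_mult by apply Rpower_pos.
  replace (1 / 2 * (2 * mX)) with mX by field.
  replace (alpha / 4 * (2 * mX)) with (alpha * mX / 2) by field.
  assert (Hprod : Rpower (mX / OX) mX * Rpower (OX / (C * mX)) mX = / Rpower C mX).
  { rewrite Rpower_mult_distr, <- Rpower_inv_base;
      [|exact HC|apply Rdiv_lt_0_compat; lra|exact HP].
    f_equal. field. lra. }
  replace (2 / Gamma mX * Rpower (mY * OX / (mY * OX + mX * OY)) mY * Rpower (mX / OX) mX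
             * (Rpower (OX / (C * mX)) mX * Rpower u (alpha * mX / 2)))
    with (2 / Gamma mX * Rpower (mY * OX / (mY * OX + mX * OY)) mY
            * (Rpower (mX / OX) mX * Rpower (OX / (C * mX)) mX) * Rpower u (alpha * mX / 2))
    by ring.
  rewrite Hprod. field. split; apply Rgt_not_eq; [apply Rpower_pos|exact HG].
Qed.

Lemma snr_pdf_ratio (g gbar : R) : 0 < g -> 0 < gbar ->
  snr_pdf mX mY OX OY alpha gbar g
    / (alpha * Rpower (1 - betabar mX mY OX OY) mY / (2 * Rpower C mX * Gamma mX * gbar)
       * Rpower (g / gbar) (alpha * mX / 2 - 1) * exp (- / C * Rpower (g / gbar) (alpha / 2)))
  = kummer_factor mX mY OX OY (snr_threshold mX mY OX OY alpha (g / gbar)).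
Proof.
  intros Hg Hgb. assert (Hu : 0 < g / gbar) by (apply Rdiv_lt_0_compat; lra).
  assert (HC : 0 < C) by apply Rpower_pos. assert (HG := Gamma_pos mX hmX).
  assert (Hr := snr_threshold_pos mX mY OX OY alpha (g / gbar)).
  rewrite snr_pdf_eq, fR_factor by assumption. unfold envelope_shape.
  rewrite one_minus_betabar, !Rpower_pred by assumption.
  replace (- (mX / OX) * snr_threshold mX mY OX OY alpha (g / gbar) ^ 2)
    with (- / C * Rpower (g / gbar) (alpha / 2))
    by (rewrite snr_threshold_sqr by assumption; fold C; field; repeat split; lra).
  set (E := exp (- / C * Rpower (g / gbar) (alpha / 2))). assert (HE : 0 < E) by apply exp_pos.
  assert (Hkey := envelope_const_at_threshold (g / gbar) Hu). fold C in Hkey.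
  set (rho := snr_threshold mX mY OX OY alpha (g / gbar)) in *.
  replace (envelope_const mX mY OX OY * (Rpower rho (2 * mX) / rho)
             * (kummer_factor mX mY OX OY rho * E) * (alpha / 4 * rho / g))
    with (envelope_const mX mY OX OY * Rpower rho (2 * mX)
            * kummer_factor mX mY OX OY rho * E * (alpha / (4 * g))) by (field; lra).
  rewrite Hkey.
  assert (0 < Rpower (mY * OX / (mY * OX + mX * OY)) mY) by apply Rpower_pos.
  assert (0 < Rpower C mX) by apply Rpower_pos.
  assert (0 < Rpower (g / gbar) (alpha * mX / 2)) by apply Rpower_pos.
  field. repeat split; lra.
Qed.

Lemma snr_cdf_ratio (g gbar : R) : 0 < g -> 0 < gbar ->
  snr_cdf mX mY OX OY alpha gbar g
    / (Rpower (1 - betabar mX mY OX OY) mY / (Rpower C mX * Gamma (mX + 1))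
       * Rpower (g / gbar) (alpha * mX / 2))
  = envelope_cdf mX mY OX OY (snr_threshold mX mY OX OY alpha (g / gbar))
    / envelope_cdf_approx mX mY OX OY (snr_threshold mX mY OX OY alpha (g / gbar)).
Proof.
  intros Hg Hgb. assert (Hu : 0 < g / gbar) by (apply Rdiv_lt_0_compat; lra).
  rewrite snr_cdf_eq, one_minus_betabar, Gamma_succ by assumption.
  f_equal. unfold envelope_cdf_approx. rewrite envelope_const_at_threshold by assumption.
  fold C. assert (HG := Gamma_pos mX hmX). assert (0 < Rpower C mX) by apply Rpower_pos.
  field. repeat split; lra.
Qed.

End Constants.

Theorem corollary1 (mX mY OX OY alpha : R)
  (hmX : 0 < mX) (hmY : 0 < mY) (hOX : 0 < OX) (hOY : 0 < OY) (halpha : 0 < alpha)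
  (g : R) (hg : 0 < g) :
  let C := Calpha mX mY OX OY alpha in
  let bb := betabar mX mY OX OY in
  asymp_equiv
    (fun gbar => snr_pdf mX mY OX OY alpha gbar g)
    (fun gbar => alpha * Rpower (1 - bb) mY / (2 * Rpower C mX * Gamma mX * gbar)
                 * Rpower (g / gbar) (alpha * mX / 2 - 1)
                 * exp (- / C * Rpower (g / gbar) (alpha / 2)))
  /\
  asymp_equiv
    (fun gbar => snr_cdf mX mY OX OY alpha gbar g)
    (fun gbar => Rpower (1 - bb) mY / (Rpower C mX * Gamma (mX + 1))
                 * Rpower (g / gbar) (alpha * mX / 2)).
Proof.
  intros C bb.
  assert (Hthreshold := snr_threshold_vanishes mX mY OX OY alpha halpha g hg).
  split; unfold asymp_equiv.
  - (* pdf / equivalent = 1F1 factor at the threshold, which tends to 1F1(0) = 1 *)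
    apply (is_lim_ext_loc
             (fun gbar => kummer_factor mX mY OX OY (snr_threshold mX mY OX OY alpha (g / gbar)))).
    + exists 0. intros gbar Hgbar. symmetry. now apply snr_pdf_ratio.
    + eapply filterlim_comp; [exact Hthreshold|now apply kummer_factor_right0].
  - (* cdf / equivalent = envelope cdf / its leading term, at a threshold tending to 0+ *)
    apply (is_lim_ext_loc
             (fun gbar => envelope_cdf mX mY OX OY (snr_threshold mX mY OX OY alpha (g / gbar))
                 / envelope_cdf_approx mX mY OX OY (snr_threshold mX mY OX OY alpha (g / gbar)))).
    + exists 0. intros gbar Hgbar. symmetry. now apply snr_cdf_ratio.
    + apply (filterlim_comp _ _ _ _
               (fun b => envelope_cdf mX mY OX OY b / envelope_cdf_approx mX mY OX OY b)
               _ _ _ Hthreshold).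
      now apply envelope_cdf_asymptotic.
Qed.
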